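(* For every $k\ge1$ (with no restriction $k\le n$), in $\mathbb{Q}[S_n]$, \[B_1^k=\sum_{j=1}^{\min(k,n)} S_{k,j}\,B_j,\] where $S_{k,j}$ is the Stirling number of the second kind.
   Context: Elements of $S_n$ are written in deck notation: a word $c_1\cdots c_n$ (a rearrangement of $1,\ldots,n$) is the deck with card $c_i$ in position $i$. Multiplication in $\mathbb{Q}[S_n]$: for $\sigma=c_1\cdots c_n$, $\tau=d_1\cdots d_n$, $\sigma\tau=c_{d_1}\cdots c_{d_n}$, extended bilinearly. For $a\in[n]$, $B_a$ is the sum of all words $c_1\cdots c_n\in S_n$ in which the letters $a+1,\ldots,n$ appear in increasing order from left to right. *)

From HB Require Import structures.
From mathcomp Require Import all_boot all_order all_algebra all_fingroup.
Set Implicit Arguments. Unset Strict Implicit. Unset Printing Implicit Defensive.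
Import GRing.Theory.
Local Open Scope ring_scope.

(* A deck c_1...c_n is encoded as s : 'S_n with s i = card at position i
   (0-indexed: position i+1 holds card (s i)+1). *)

Notation QSn n := {ffun 'S_n -> rat}.

(* Deck product: (sigma tau) has card c_{d_i} at position i, i.e. the
   function i |-> sigma (tau i); in mathcomp's left-to-right convention
   this is (tau * sigma)%g. *)
Definition deck_mul n (sigma tau : 'S_n) : 'S_n := (tau * sigma)%g.

Definition qmul n (f g : QSn n) : QSn n :=
  [ffun w => \sum_(s : 'S_n) \sum_(t : 'S_n)
                (f s * g t) *+ (deck_mul s t == w)].

Definition qone n : QSn n := [ffun w => (w == 1%g)%:R].

Definition qpow n (f : QSn n) (k : nat) : QSn n := iter k (qmul f) (qone n).

(* B_a : sum of all decks in which the letters a+1,...,n appear in increasing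
   order from left to right.  Letter c (1-indexed) is x : 'I_n with x = c-1,
   and its position is s^-1 x. *)
Definition inc_above n (a : nat) (s : 'S_n) : bool :=
  [forall x : 'I_n, forall y : 'I_n,
     ((a <= x)%N && (x < y)%N) ==> ((s^-1)%g x < (s^-1)%g y)%N].

Definition B n (a : nat) : QSn n := [ffun s => (inc_above a s)%:R].

Fixpoint stirling2 (k j : nat) : nat :=
  match k, j with
  | 0, 0 => 1
  | 0, _.+1 => 0
  | _.+1, 0 => 0
  | k'.+1, j'.+1 => (j'.+1 * stirling2 k' j'.+1 + stirling2 k' j')%N
  end.

From HB Require Import structures.
From mathcomp Require Import all_boot all_order all_algebra all_fingroup.
From mathcomp Require Import zify.
Set Implicit Arguments. Unset Strict Implicit. Unset Printing Implicit Defensive.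
Import GRing.Theory.

(* The decks with letters 2..n in increasing order are the n decks [rot p]
   with card 1 at position p+1 and the other cards in order, so the
   coefficient of w in B_1 g is the sum over p of the coefficients of
   w rot(p)^-1 in g.  The deck w rot(p)^-1 relabels letters 2..p+1 of w as
   1..p and letter 1 as p+1.  If p < a this leaves letters a+1..n alone, so
   w rot(p)^-1 lies in B_a iff w does; if p >= a it lies in B_a iff letters
   a+2..n of w increase and letter 1 of w sits between letters p+1 and p+2,
   which happens for exactly one p when w lies in B_(a+1).  Hence
   B_1 B_a = a B_a + B_(a+1) for a < n and B_1 B_n = n B_n, and B_1^k follows
   the Stirling recurrence S(k+1,a) = a S(k,a) + S(k,a-1). *)

Ltac case_ifs := repeat (case: ifP => ?).

Definition rotn (p x : nat) : nat :=
  if x < p then x.+1 else if x == p then 0 else x.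
Definition rotn_inv (p x : nat) : nat :=
  if x == 0 then p else if x <= p then x.-1 else x.

Lemma rotn_lt p x : x < p -> rotn p x = x.+1.
Proof. by rewrite /rotn => ->. Qed.

Lemma rotn_id p : rotn p p = 0.
Proof. by rewrite /rotn ltnn eqxx. Qed.

Lemma rotn_gt p x : p < x -> rotn p x = x.
Proof. by rewrite /rotn => h; case_ifs; lia. Qed.

Lemma rotn_bound m p x : p < m -> x < m -> rotn p x < m.
Proof. rewrite /rotn; case_ifs; lia. Qed.

Lemma rotn_inv_bound m p x : p < m -> x < m -> rotn_inv p x < m.
Proof. rewrite /rotn_inv; case_ifs; lia. Qed.

Lemma increasing_from1E n (g : nat -> nat) :
  (forall x, x < n -> g x < n) ->
  (forall x y, x < n -> y < n -> g x = g y -> x = y) ->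
  (forall x y, 1 <= x -> x < y -> y < n -> g x < g y) ->
  forall x, x < n -> g x = rotn_inv (g 0) x.
Proof.
move=> g_bound g_inj g_incr x xn.
have grow d z : 1 <= z -> z + d < n -> g z + d <= g (z + d).
  elim: d => [|d IH] hz hzd; first by rewrite !addn0.
  have := IH hz ltac:(lia).
  have := g_incr (z + d) (z + d.+1) ltac:(lia) ltac:(lia) hzd; lia.
have ge_pred z : 1 <= z -> z < n -> z.-1 <= g z.
  by move=> hz zn; have := grow (z - 1) 1 (leqnn _); rewrite addnC subnK; lia.
have le_id z : 1 <= z -> z < n -> g z <= z.
  move=> hz zn; have := grow (n.-1 - z) z hz.
  rewrite subnKC; last lia.
  by have := g_bound n.-1; lia.
set p := g 0; have pn : p < n by apply: g_bound; lia.
rewrite /rotn_inv; case: ifP => [/eqP -> //|x0].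
have := ge_pred x ltac:(lia) xn; have := le_id x ltac:(lia) xn.
case: ifP => xp.
- case: (ltngtP (g x) x) => E; try lia.
  have := grow (p - x) x ltac:(lia) ltac:(lia); rewrite subnKC //.
  have := le_id p ltac:(lia) pn; have := g_inj p 0 pn ltac:(lia); lia.
- case: (ltngtP (g x) x) => E; try lia.
  have := grow (x - p.+1) p.+1 ltac:(lia) ltac:(lia); rewrite subnKC; last lia.
  have := ge_pred p.+1 ltac:(lia) ltac:(lia).
  have := g_inj p.+1 0 ltac:(lia) ltac:(lia); lia.
Qed.

Lemma rotn_increasingE n j p (P : nat -> nat) :
  1 <= j -> j <= p -> p < n ->
  (forall x y, j <= x -> x < y -> y < n -> P (rotn p x) < P (rotn p y)) <->
  [/\ forall x y, j.+1 <= x -> x < y -> y < n -> P x < P y,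
      j < p -> P p < P 0 & p.+1 < n -> P 0 < P p.+1].
Proof.
move=> j1 jp pn; split.
- move=> H; split.
  + move=> x y jx xy yn; case: (leqP x p) => xp; case: (leqP y p) => yp.
    * have := H x.-1 y.-1 ltac:(lia) ltac:(lia) ltac:(lia).
      by rewrite !rotn_lt ?prednK //; lia.
    * have := H x.-1 y ltac:(lia) ltac:(lia) ltac:(lia).
      by rewrite rotn_lt ?prednK ?rotn_gt //; lia.
    * lia.
    * by have := H x y ltac:(lia) ltac:(lia) ltac:(lia); rewrite !rotn_gt.
  + move=> jp'; have := H p.-1 p ltac:(lia) ltac:(lia) ltac:(lia).
    by rewrite rotn_lt ?prednK ?rotn_id //; lia.
  + move=> pn'; have := H p p.+1 ltac:(lia) ltac:(lia) ltac:(lia).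
    by rewrite rotn_id rotn_gt.
- case=> above p_below p_above x y jx xy yn.
  case: (ltngtP x p) => xp; case: (ltngtP y p) => yp; try lia.
  + by rewrite !rotn_lt //; apply: above; lia.
  + by rewrite rotn_lt // rotn_gt //; apply: above; lia.
  + rewrite rotn_lt // yp rotn_id.
    case: (ltngtP x.+1 p) => xp'; try lia.
    * by apply: ltn_trans (above _ _ _ _ _) (p_below _); lia.
    * by rewrite xp'; apply: p_below; lia.
  + by rewrite !rotn_gt //; apply: above; lia.
  + rewrite xp rotn_id rotn_gt //.
    case: (ltngtP p.+1 y) => yp'; try lia.
    * by apply: ltn_trans (p_above _) (above _ _ _ _ _); lia.
    * by rewrite -yp'; apply: p_above; lia.
Qed.

Lemma sum_boundary (f : nat -> bool) j n : j <= n -> f n = false ->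
  (forall q, j <= q -> q < n -> f q.+1 -> f q) ->
  \sum_(j <= q < n) (f q && ~~ f q.+1) = f j.
Proof.
move=> jn; rewrite -(subnKC jn) {jn}; move: (n - j) => k.
elim: k j => [|k IH] j f_end f_down.
  by rewrite addn0 in f_end *; rewrite big_geq // f_end.
rewrite big_ltn; last lia.
rewrite -addSnnS IH ?addSnnS //; last by move=> q h1 h2; apply: f_down; lia.
by case E: (f j.+1); [rewrite (f_down j) //=; lia | rewrite andbT addn0].
Qed.

Lemma stirling2_eq0 k j : k < j -> stirling2 k j = 0.
Proof. by elim: k j => [|k IH] [|j] //= h; rewrite !IH ?muln0 //; lia. Qed.

Section Decks.
Variable m : nat.
Implicit Types (w s : 'S_m.+1) (p : 'I_m.+1).

(* The 0-indexed position of letter y+1 in w; for y > m, junk (that of letter 1). *)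
Definition pos w (y : nat) : nat := (w^-1)%g (inord y).

Lemma pos_inj w x y : x < m.+1 -> y < m.+1 -> pos w x = pos w y -> x = y.
Proof.
move=> xn yn /val_inj /perm_inj /(congr1 (@nat_of_ord _)).
by rewrite !inordK.
Qed.

Lemma inc_aboveP (a : nat) w :
  reflect (forall x y, a <= x -> x < y -> y < m.+1 -> pos w x < pos w y)
    (inc_above a w).
Proof.
apply: (iffP forallP) => H.
- move=> x y ax xy ym; have := forallP (H (inord x)) (inord y).
  by rewrite !inordK ?ax ?xy //=; lia.
- move=> x; apply/forallP => y; apply/implyP => /andP[ax xy].
  by have := H x y ax xy (ltn_ord y); rewrite /pos !inord_val.
Qed.

Section Rot.
Variable p : 'I_m.+1.

Lemma rot_subproof : injective (fun x : 'I_m.+1 => inord (rotn p x) : 'I_m.+1).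
Proof.
move=> x y /(congr1 (@nat_of_ord _)); rewrite !inordK ?rotn_bound // => h.
apply/val_inj => /=; move: h; rewrite /rotn.
by have := ltn_ord x; have := ltn_ord y; have := ltn_ord p; case_ifs; lia.
Qed.

Definition rot : 'S_m.+1 := perm rot_subproof.

Lemma rotE x : rot x = inord (rotn p x).
Proof. by rewrite permE. Qed.

Lemma rotVE x : x < m.+1 -> (rot^-1)%g (inord x) = inord (rotn_inv p x).
Proof.
move=> xm; apply: (@perm_inj _ rot).
rewrite permKV rotE inordK ?rotn_inv_bound //; congr inord.
by have := ltn_ord p; rewrite /rotn_inv; case_ifs; rewrite /rotn; case_ifs; lia.
Qed.

Lemma rot_inc_above1 : inc_above 1 rot.
Proof.
apply/inc_aboveP => x y hx xy ym; have hp := ltn_ord p.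
rewrite /pos !rotVE; try lia.
rewrite !inordK; try by apply: rotn_inv_bound; lia.
by rewrite /rotn_inv; case_ifs; lia.
Qed.

Lemma rotV0 : (rot^-1)%g ord0 = p.
Proof.
have -> : (ord0 : 'I_m.+1) = inord 0 by apply/val_inj; rewrite /= inordK.
by rewrite rotVE //; apply/val_inj; rewrite /= inordK ?rotn_inv_bound.
Qed.

Lemma pos_mul_rotV w x : x < m.+1 -> pos (w * rot^-1)%g x = pos w (rotn p x).
Proof. by move=> xm; rewrite /pos invMg invgK permM rotE inordK. Qed.

End Rot.

Lemma inc_above1_rot s : inc_above 1 s -> s = rot ((s^-1)%g ord0).
Proof.
move=> /inc_aboveP s_incr; apply: invg_inj; apply/permP => x; apply/val_inj.
rewrite /= -(inord_val x) rotVE // inordK; last exact: rotn_inv_bound.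
have -> : nat_of_ord ((s^-1)%g ord0) = pos s 0.
  by rewrite /pos; congr (nat_of_ord ((s^-1)%g _)); apply/val_inj; rewrite /= inordK.
apply: (increasing_from1E (g := pos s)) => //.
- by move=> y _; exact: ltn_ord.
- exact: pos_inj.
- exact: s_incr.
Qed.

Lemma inc_above_mul_rotVP j w p :
  reflect (forall x y, j <= x -> x < y -> y < m.+1 ->
             pos w (rotn p x) < pos w (rotn p y))
          (inc_above j (w * (rot p)^-1)%g).
Proof.
apply: (iffP (inc_aboveP _ _)) => H x y jx xy ym;
  by have := H x y jx xy ym; rewrite !pos_mul_rotV; lia.
Qed.

Lemma sum_rot_below j w : j <= m.+1 ->
  \sum_(0 <= q < j) inc_above j (w * (rot (inord q))^-1)%g = inc_above j w * j.
Proof.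
move=> jm; rewrite mulnC -[j in j * _]subn0 -sum_nat_const_nat.
apply: eq_big_nat => q /andP[_ qj]; congr (nat_of_bool _).
have rot_fix x : j <= x -> rotn (inord q : 'I_m.+1) x = x.
  by move=> jx; rewrite inordK ?rotn_gt; lia.
apply/inc_above_mul_rotVP/inc_aboveP => H x y jx xy ym; have := H x y jx xy ym;
  by rewrite !rot_fix //; lia.
Qed.

Lemma inc_above_mul_rotVE j w q : 1 <= j <= q -> q < m.+1 ->
  inc_above j (w * (rot (inord q))^-1)%g =
  [&& inc_above j.+1 w, (j < q) ==> (pos w q < pos w 0)
    & (q.+1 < m.+1) ==> (pos w 0 < pos w q.+1)].
Proof.
move=> /andP[j1 jq] qm; have rot_incrE := rotn_increasingE (pos w) j1 jq qm.
apply/inc_above_mul_rotVP/and3P; rewrite inordK //.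
- case/rot_incrE => above below_q above_q.
  by split; [apply/inc_aboveP | apply/implyP | apply/implyP].
- by case=> /inc_aboveP above /implyP below_q /implyP above_q; apply/rot_incrE.
Qed.

Lemma sum_rot_above j w : 1 <= j < m.+1 ->
  \sum_(j <= q < m.+1) inc_above j (w * (rot (inord q))^-1)%g = inc_above j.+1 w.
Proof.
case/andP => j1 jm.
case A: (inc_above j.+1 w); last first.
  by rewrite big_nat big1 // => q /andP[jq qm]; rewrite inc_above_mul_rotVE ?j1 // A.
have w_incr := elimT (inc_aboveP _ _) A.
pose before q := (q == j) || (q < m.+1) && (pos w q < pos w 0).
transitivity (\sum_(j <= q < m.+1) (before q && ~~ before q.+1)).
  apply: eq_big_nat => q /andP[jq qm]; congr (nat_of_bool _).
  rewrite inc_above_mul_rotVE ?j1 // A /=; congr (_ && _).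
    rewrite /before qm /= eq_sym; by case: (ltngtP j q) jq.
  rewrite /before gtn_eqF ?ltnS //=; case: (ltnP q m) => //= qm'.
  have ne : pos w 0 != pos w q.+1 by apply/eqP => /(@pos_inj w 0 q.+1 (ltn0Sn _) qm').
  by rewrite ltn_neqAle ne leqNgt.
rewrite (sum_boundary (f := before)).
- by rewrite /before eqxx.
- exact: ltnW.
- by rewrite /before ltnn andFb orbF gtn_eqF.
- move=> q jq qm; rewrite /before (gtn_eqF (jq : j < q.+1)) /= => /andP[qm' below].
  rewrite eq_sym qm; case: (ltngtP j q) jq => //= jq' _.
  exact: ltn_trans (w_incr q q.+1 jq' (ltnSn _) qm') below.
Qed.

Lemma sum_rot_inc_above j w : 1 <= j <= m.+1 ->
  \sum_(p < m.+1) inc_above j (w * (rot p)^-1)%g =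
  inc_above j w * j + inc_above j.+1 w * (j < m.+1).
Proof.
case/andP => j1 jm.
pose G q := nat_of_bool (inc_above j (w * (rot (inord q))^-1)%g).
rewrite (eq_bigr (G \o val)) => [|p _]; last by rewrite /G /= inord_val.
rewrite -(big_mkord xpredT G) (big_cat_nat (leq0n j) jm) sum_rot_below //.
congr (_ + _); case: ltnP => [jm'|mj].
- by rewrite muln1 sum_rot_above ?j1.
- by rewrite muln0 big_geq.
Qed.

End Decks.

Local Open Scope ring_scope.

Lemma qmulE n (f g : QSn n) w : qmul f g w = \sum_(s : 'S_n) f s * g (w * s^-1)%g.
Proof.
rewrite ffunE; apply: eq_bigr => s _.
rewrite (bigD1 (w * s^-1)%g) //= big1 ?addr0 => [|t ht].
  by rewrite /deck_mul mulgVK eqxx mulr1n.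
rewrite /deck_mul; case: eqP => [E|]; last by rewrite mulr0n.
by move: ht; rewrite -E mulgK eqxx.
Qed.

Lemma qmul1 n (f : QSn n) : qmul f (qone n) = f.
Proof.
apply/ffunP => w; rewrite qmulE (bigD1 w) //= big1 ?addr0 => [|s sw].
  by rewrite ffunE mulgV eqxx mulr1.
by rewrite ffunE -eq_mulgV1 eq_sym (negbTE sw) mulr0.
Qed.

Lemma qmul_sumr n (f : QSn n) (r : seq nat) (G : nat -> QSn n) (c : nat -> nat) :
  qmul f (\sum_(j <- r) G j *+ c j) = \sum_(j <- r) qmul f (G j) *+ c j.
Proof.
apply/ffunP => w; rewrite qmulE sum_ffunE.
under eq_bigr => s _ do rewrite sum_ffunE mulr_sumr.
rewrite exchange_big /=; apply: eq_bigr => j _.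
rewrite ffunMnE qmulE -sumrMnl; apply: eq_bigr => s _.
by rewrite ffunMnE mulrnAr.
Qed.

Lemma qmul_B1 m (g : QSn m.+1) w :
  qmul (B m.+1 1) g w = \sum_(p < m.+1) g (w * (rot p)^-1)%g.
Proof.
rewrite qmulE (eq_bigr (fun s => if inc_above 1 s then g (w * s^-1)%g else 0));
  last by move=> s _; rewrite ffunE; case: (inc_above 1 s); rewrite ?mul1r ?mul0r.
rewrite -big_mkcond (reindex_onto (@rot m) (fun s => (s^-1)%g ord0)) /=.
  by apply: eq_bigl => p; rewrite rot_inc_above1 rotV0 eqxx.
by move=> s /inc_above1_rot.
Qed.

Lemma qmul_B1B m j : (1 <= j <= m.+1)%N ->
  qmul (B m.+1 1) (B m.+1 j) = B m.+1 j *+ j + B m.+1 j.+1 *+ (j < m.+1)%N.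
Proof.
move=> jm; apply/ffunP => w; rewrite qmul_B1.
under eq_bigr => p _ do rewrite ffunE.
by rewrite !ffunE !ffunMnE !ffunE -natr_sum sum_rot_inc_above // natrD -!mulrnA.
Qed.

Lemma sum_shift_coef (V : nmodType) (G : nat -> V) n (c : nat -> nat) :
  c 0%N = 0%N ->
  \sum_(1 <= j < n.+1) (G j *+ j + G j.+1 *+ (j < n)%N) *+ c j =
  \sum_(1 <= j < n.+1) G j *+ (j * c j + c j.-1)%N.
Proof.
move=> c0.
under eq_bigr => j _ do rewrite mulrnDl -!mulrnA.
under [RHS]eq_bigr => j _ do rewrite mulrnDr.
rewrite !big_split /=; congr (_ + _).
case: n => [|n]; first by rewrite !big_geq.
rewrite [LHS]big_nat_recr //= ltnn mul0n mulr0n addr0.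
rewrite [RHS]big_nat_recl //= c0 mulr0n add0r.
by apply: eq_big_nat => j /andP[_ jn]; rewrite jn mul1n.
Qed.

Lemma sum_stirling2_min (V : nmodType) (G : nat -> V) k n :
  \sum_(1 <= j < n.+1) G j *+ stirling2 k j =
  \sum_(1 <= j < (minn k n).+1) G j *+ stirling2 k j.
Proof.
case: (leqP n k) => // kn.
rewrite (@big_cat_nat _ _ _ k.+1) //=; last exact: ltnW.
rewrite -[RHS]addr0; congr (_ + _); rewrite big_nat big1 // => j /andP[kj _].
by rewrite stirling2_eq0 ?mulr0n.
Qed.

Lemma qpow_B1 m k : (1 <= k)%N ->
  qpow (B m.+1 1) k = \sum_(1 <= j < m.+2) B m.+1 j *+ stirling2 k j.
Proof.
elim: k => // [[_ _|k IH _]].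
  rewrite [LHS]qmul1 big_ltn // big_nat big1 ?addr0 //.
  by move=> j /andP[j1 _]; rewrite stirling2_eq0 ?mulr0n.
rewrite [LHS]/qpow iterS -/(qpow _ _) IH // qmul_sumr.
rewrite (eq_big_nat _ _ (F2 := fun j =>
  (B m.+1 j *+ j + B m.+1 j.+1 *+ (j < m.+1)%N) *+ stirling2 k.+1 j)); last first.
  by move=> j /andP[j1 jm]; rewrite qmul_B1B // j1.
rewrite sum_shift_coef //; apply: eq_big_nat => j /andP[j1 _].
by case: j j1.
Qed.

Theorem mainTheorem5 (n k : nat) (hn : (1 <= n)%N) (hk : (1 <= k)%N) :
  qpow (B n 1) k =
  \sum_(1 <= j < (minn k n).+1) B n j *+ stirling2 k j.
Proof. by case: n hn => // m _; rewrite qpow_B1 // sum_stirling2_min. Qed.
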